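(* Let $n$ be an odd positive integer and $p=\frac{n-1}{2}$. The $\mathrm{SU}(\frac{n+1}{2})\times\mathrm{SU}(\frac{n+1}{2})$-equivariant spectra of the harmonic maps $\psi_1$ and $\psi_{-1}$ are both equal to $\{\lambda_j=4j(j+n+2): j\in\mathbb Z_{\ge0}\}$.
   Context: $\mathbb{CP}^n$ carries the Fubini–Study metric (the metric making $\mathbb S^{2n+1}\to\mathbb{CP}^n$ a Riemannian submersion). $G=\mathrm{SU}(p+1)\times\mathrm{SU}(n-p)$ acts by $(A,B)\cdot[Z]=[\operatorname{diag}(A,B)Z]$; with $\gamma(t)=[\cos t\,e_1+\sin t\,e_{p+2}]$ every point is $g\cdot\gamma(t)$, $g\in G$, $t\in[0,\pi/2]$. For $\rho\ne0$ let $r_\rho(t)=\arctan(\rho\tan t)$ on $[0,\pi/2)$, $r_\rho(\pi/2)=\operatorname{sign}(\rho)\pi/2$, and $\psi_\rho(g\cdot\gamma(t))=g\cdot\gamma(r_\rho(t))$ (so $\psi_1=\mathrm{id}$ and $r_{-1}(t)=-t$). The equivariant spectrum of $\psi_\rho$ is the set of $\lambda\in\mathbb R$ for which \[ \ddot\xi+\big[(2n-2p-1)\cot t-(2p+1)\tan t\big]\dot\xi-\Big[2(n-p-1)\frac{\cos 2r_\rho(t)}{\sin^2t}-2p\frac{\cos2r_\rho(t)}{\cos^2t}+4\frac{\cos4r_\rho(t)}{\sin^22t}\Big]\xi+\lambda\xi=0 \] has a nonzero solution $\xi\in C^\infty_0([0,\tfrac\pi2])$ (smooth, vanishing at $0$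 and $\pi/2$). *)

From Stdlib Require Import Reals.
From Coquelicot Require Import Coquelicot.
Open Scope R_scope.

Definition sgnR (x : R) : R :=
  if Rlt_dec 0 x then 1 else if Rlt_dec x 0 then -1 else 0.

Definition r_rho (rho t : R) : R :=
  if Rlt_dec t (PI / 2) then atan (rho * tan t) else sgnR rho * (PI / 2).

Definition cotR (t : R) : R := cos t / sin t.

(* smooth function on R (restriction gives a smooth function on [0,pi/2];
   every smooth function on [0,pi/2] has such an extension) *)
Definition smooth (f : R -> R) : Prop := forall k x, ex_derive_n f k x.

Definition jacobi_op (n p : nat) (rho lam : R) (xi : R -> R) (t : R) : R :=
  Derive_n xi 2 t
  + ((2 * INR n - 2 * INR p - 1) * cotR t - (2 * INR p + 1) * tan t) * Derive_n xi 1 t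
  - (2 * (INR n - INR p - 1) * cos (2 * r_rho rho t) / (sin t) ^ 2
     - 2 * INR p * cos (2 * r_rho rho t) / (cos t) ^ 2
     + 4 * cos (4 * r_rho rho t) / (sin (2 * t)) ^ 2) * xi t
  + lam * xi t.

(* lam is in the equivariant spectrum of psi_rho iff the ODE has a nonzero
   solution xi in C^infty_0([0,pi/2]); the ODE is imposed on (0,pi/2),
   where its coefficients are defined. *)
Definition equivariant_spectrum (n p : nat) (rho : R) (lam : R) : Prop :=
  exists xi : R -> R,
    smooth xi /\ xi 0 = 0 /\ xi (PI / 2) = 0 /\
    (exists t, 0 <= t <= PI / 2 /\ xi t <> 0) /\
    (forall t, 0 < t < PI / 2 -> jacobi_op n p rho lam xi t = 0).

(* For rho = 1 or -1 the map r_rho is t |-> t or t |-> -t, so both equations read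
   L xi + lam xi = 0 with L = d^2 + n (cot t - tan t) d - V (here n = 2p + 1).
   On psi_k = cos t sin^(2k+1) t the operator acts triangularly,
   L psi_k = - lam_k psi_k + c_k psi_(k-1) with lam_k = 4k(k+n+2) and c_0 = 0,
   so every lam_j has a trigonometric-polynomial eigenfunction sum_(k<=j) b_k psi_k.
   Conversely, L is symmetric for the weight w = (sin t cos t)^n, which vanishes at
   both ends of [0, pi/2]; Green's formula gives
   (lam - lam_k) <xi, psi_k>_w + c_k <xi, psi_(k-1)>_w = 0, so if lam is no lam_k all
   these moments vanish. They are the moments of w xi cos t sin t against (sin^2 t)^k,
   and Bernstein approximation in the variable sin^2 t yields
   int w cos t sin t xi^2 = 0, hence xi = 0. *)

From Stdlib Require Import Reals Arith.
From Coquelicot Require Import Coquelicot.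
From Stdlib Require Import Lra Lia Nsatz Classical.
Open Scope R_scope.
Set Bullet Behavior "Strict Subproofs".

(* Coquelicot's lemmas specialised to functions [R -> R], in a form that [rewrite] and
   [apply] can match. *)
Lemma is_derive_Rmult (f g : R -> R) x df dg : is_derive f x df -> is_derive g x dg ->
  is_derive (fun t => f t * g t) x (df * g x + f x * dg).
Proof. intros Hf Hg. apply (is_derive_mult f g x df dg Hf Hg). exact Rmult_comm. Qed.

Lemma continuous_Rplus (f g : R -> R) x : continuous f x -> continuous g x ->
  continuous (fun t => f t + g t) x.
Proof. exact (continuous_plus f g x). Qed.

Lemma continuous_Rminus (f g : R -> R) x : continuous f x -> continuous g x ->
  continuous (fun t => f t - g t) x.
Proof. exact (continuous_minus f g x). Qed.

Lemma continuous_Rmult (f g : R -> R) x : continuous f x -> continuous g x ->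
  continuous (fun t => f t * g t) x.
Proof. exact (continuous_mult f g x). Qed.

Lemma RInt_Rplus (f g : R -> R) a b : ex_RInt f a b -> ex_RInt g a b ->
  RInt (fun t => f t + g t) a b = RInt f a b + RInt g a b.
Proof. exact (RInt_plus f g a b). Qed.

Lemma RInt_Rminus (f g : R -> R) a b : ex_RInt f a b -> ex_RInt g a b ->
  RInt (fun t => f t - g t) a b = RInt f a b - RInt g a b.
Proof. exact (RInt_minus f g a b). Qed.

Lemma RInt_Ropp (f : R -> R) a b : ex_RInt f a b -> RInt (fun t => - f t) a b = - RInt f a b.
Proof. exact (RInt_opp f a b). Qed.

Lemma RInt_Rmult_l (f : R -> R) c a b : ex_RInt f a b ->
  RInt (fun t => c * f t) a b = c * RInt f a b.
Proof. exact (RInt_scal f a b c). Qed.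

Inductive trig_poly : (R -> R) -> Prop :=
  | trig_poly_const c : trig_poly (fun _ => c)
  | trig_poly_sin : trig_poly sin
  | trig_poly_cos : trig_poly cos
  | trig_poly_plus f g : trig_poly f -> trig_poly g -> trig_poly (fun x => f x + g x)
  | trig_poly_mult f g : trig_poly f -> trig_poly g -> trig_poly (fun x => f x * g x)
  | trig_poly_ext f g : (forall x, f x = g x) -> trig_poly f -> trig_poly g.

Lemma trig_poly_minus f g : trig_poly f -> trig_poly g -> trig_poly (fun x => f x - g x).
Proof.
  intros Hf Hg. apply (trig_poly_ext (fun x => f x + (fun _ => -1) x * g x)).
  - intros x; ring.
  - apply trig_poly_plus, trig_poly_mult; auto using trig_poly_const.
Qed.

Lemma trig_poly_opp f : trig_poly f -> trig_poly (fun x => - f x).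
Proof.
  intros Hf. apply (trig_poly_ext (fun x => (fun _ => -1) x * f x)).
  - intros x; ring.
  - exact (trig_poly_mult _ _ (trig_poly_const _) Hf).
Qed.

Lemma trig_poly_pow f m : trig_poly f -> trig_poly (fun x => f x ^ m).
Proof.
  intros Hf; induction m as [|m IH]; simpl.
  - apply trig_poly_const.
  - exact (trig_poly_mult _ _ Hf IH).
Qed.

Lemma trig_poly_sum (F : nat -> R -> R) N :
  (forall k, trig_poly (F k)) -> trig_poly (fun t => sum_f_R0 (fun k => F k t) N).
Proof.
  intros HF; induction N as [|N IH]; simpl.
  - exact (HF 0%nat).
  - exact (trig_poly_plus _ _ IH (HF (S N))).
Qed.

Ltac prove_trig_poly :=
  repeat first
    [ apply trig_poly_const | apply trig_poly_sin | apply trig_poly_cos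
    | apply trig_poly_pow | apply trig_poly_minus | apply trig_poly_opp
    | apply trig_poly_plus | apply trig_poly_mult ].

Lemma trig_poly_is_derive f :
  trig_poly f -> exists f', trig_poly f' /\ forall x, is_derive f x (f' x).
Proof.
  induction 1 as [c| | |f g _ [f' [Hf' Df]] _ [g' [Hg' Dg]]
                 |f g Hf [f' [Hf' Df]] Hg [g' [Hg' Dg]]|f g Hfg _ [f' [Hf' Df]]].
  - exists (fun _ => 0); split; [apply trig_poly_const|]. intros x; exact (is_derive_const c x).
  - exists cos; split; [apply trig_poly_cos|]. apply is_derive_sin.
  - exists (fun x => - sin x); split.
    + prove_trig_poly.
    + apply is_derive_cos.
  - exists (fun x => f' x + g' x); split; [prove_trig_poly; auto|].
    intros x; exact (is_derive_plus f g x _ _ (Df x) (Dg x)).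
  - exists (fun x => f' x * g x + f x * g' x); split; [prove_trig_poly; auto|].
    intros x; apply is_derive_Rmult; auto.
  - exists f'; split; auto. intros x; apply (is_derive_ext f); auto.
Qed.

Lemma trig_poly_continuous f (x : R) : trig_poly f -> continuous f x.
Proof.
  intros Hf. destruct (trig_poly_is_derive f Hf) as [f' [_ Df]].
  apply (@ex_derive_continuous R_AbsRing R_NormedModule). exists (f' x). apply Df.
Qed.

Lemma trig_poly_Derive_n f k : trig_poly f -> trig_poly (Derive_n f k).
Proof.
  intros Hf; induction k as [|k IH]; simpl; [exact Hf|].
  destruct (trig_poly_is_derive _ IH) as [f' [Hf' Df]].
  apply (trig_poly_ext f'); auto.
  intros x; symmetry; apply is_derive_unique, Df.
Qed.

Lemma trig_poly_smooth f : trig_poly f -> smooth f.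
Proof.
  intros Hf [|k] x; simpl; [exact I|].
  destruct (trig_poly_is_derive _ (trig_poly_Derive_n f k Hf)) as [f' [_ Df]].
  exists (f' x); apply Df.
Qed.

Lemma smooth_is_derive (f : R -> R) k x :
  smooth f -> is_derive (Derive_n f k) x (Derive_n f (S k) x).
Proof. intros Hf. exact (Derive_correct _ _ (Hf (S k) x)). Qed.

Lemma smooth_continuous (f : R -> R) k x : smooth f -> continuous (Derive_n f k) x.
Proof.
  intros Hf. apply (@ex_derive_continuous R_AbsRing R_NormedModule).
  exists (Derive_n f (S k) x). now apply smooth_is_derive.
Qed.

Lemma smooth_lipschitz (f : R -> R) : smooth f -> forall a b, a <= b -> exists L,
  forall t s, a <= t <= b -> a <= s <= b -> Rabs (f t - f s) <= L * Rabs (t - s).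
Proof.
  intros Hf a b Hab.
  destruct (continuity_ab_maj (fun x => Rabs (Derive_n f 1 x)) a b Hab) as [M [HM HMab]].
  { intros c _. apply continuity_pt_filterlim.
    apply (continuous_comp _ Rabs); [apply smooth_continuous, Hf|apply continuous_Rabs]. }
  exists (Rabs (Derive_n f 1 M)). intros t s Ht Hs.
  destruct (MVT_gen f s t (Derive_n f 1)) as [c [Hc ->]].
  - intros x _. exact (smooth_is_derive f 0 x Hf).
  - intros x _. apply continuity_pt_filterlim. exact (smooth_continuous f 0 x Hf).
  - rewrite Rabs_mult. apply Rmult_le_compat_r; [apply Rabs_pos|].
    apply HM. split.
    + apply Rle_trans with (Rmin s t); [apply Rmin_glb; lra|apply Hc].
    + apply Rle_trans with (Rmax s t); [apply Hc|apply Rmax_lub; lra].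
Qed.

Lemma continuous_pos_locally (f : R -> R) a : continuous f a -> 0 < f a ->
  exists d, 0 < d /\ forall x, Rabs (x - a) < d -> 0 < f x.
Proof.
  intros Hc Ha.
  assert (Hpos : locally (f a) (fun y => 0 < y)).
  { exists (mkposreal _ Ha). intros y Hy.
    change (Rabs (y - f a) < f a) in Hy. apply Rabs_def2 in Hy. lra. }
  destruct (Hc _ Hpos) as [d Hd].
  exists d. split; [apply cond_pos|]. intros x Hx. exact (Hd x Hx).
Qed.

Lemma RInt_nonneg_eq0 (f : R -> R) a b t : a < t < b -> (forall x, continuous f x) ->
  (forall x, a < x < b -> 0 <= f x) -> RInt f a b = 0 -> f t = 0.
Proof.
  intros Ht Hc Hpos HI.
  destruct (Req_dec (f t) 0) as [|Hne]; [assumption|exfalso].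
  destruct (continuous_pos_locally f t (Hc t)) as [d [Hd Hft]].
  { specialize (Hpos t Ht). lra. }
  set (e := Rmin d (Rmin (t - a) (b - t)) / 2).
  assert (He : 0 < e /\ e < d /\ e < t - a /\ e < b - t).
  { assert (0 < Rmin d (Rmin (t - a) (b - t))) by (repeat apply Rmin_pos; lra).
    pose proof (Rmin_l d (Rmin (t - a) (b - t))). pose proof (Rmin_r d (Rmin (t - a) (b - t))).
    pose proof (Rmin_l (t - a) (b - t)). pose proof (Rmin_r (t - a) (b - t)).
    unfold e; lra. }
  assert (Hex : forall u v, ex_RInt f u v)
    by (intros; apply (@ex_RInt_continuous R_CompleteNormedModule); auto).
  assert (Hsplit : RInt f a b = RInt f a (t - e) + RInt f (t - e) (t + e) + RInt f (t + e) b).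
  { rewrite <- (RInt_Chasles f a (t - e) b), <- (RInt_Chasles f (t - e) (t + e) b) by auto.
    unfold plus; simpl; ring. }
  assert (0 <= RInt f a (t - e)) by (apply RInt_ge_0; auto; [lra|intros; apply Hpos; lra]).
  assert (0 <= RInt f (t + e) b) by (apply RInt_ge_0; auto; [lra|intros; apply Hpos; lra]).
  assert (0 < RInt f (t - e) (t + e)).
  { apply RInt_gt_0; [lra| |auto].
    intros x Hx. apply Hft. apply Rabs_def1; lra. }
  lra.
Qed.

Lemma Rle_of_le_plus_div_INR (a b c : R) :
  (forall m, (0 < m)%nat -> a <= b + c / INR m) -> a <= b.
Proof.
  intros H. apply Rle_plus_epsilon. intros eps Heps.
  destruct (archimed_cor1 (eps / (Rabs c + 1))) as [m [Hm Hm0]].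
  { apply Rdiv_lt_0_compat; [lra|]. pose proof (Rabs_pos c). lra. }
  assert (0 < INR m) by (apply lt_0_INR; exact Hm0).
  assert (c / INR m <= eps).
  { apply Rle_trans with (Rabs c * / INR m); [unfold Rdiv; apply Rmult_le_compat_r;
      [apply Rlt_le, Rinv_0_lt_compat; lra|apply RRle_abs]|].
    apply Rle_trans with (Rabs c * (eps / (Rabs c + 1))).
    - apply Rmult_le_compat_l; [apply Rabs_pos|lra].
    - pose proof (Rabs_pos c). apply (Rmult_le_reg_r (Rabs c + 1)); [lra|].
      field_simplify; nra. }
  specialize (H m Hm0). lra.
Qed.

Lemma Rle_0_of_le_mult_small (a k E : R) : 0 < E ->
  (forall e, 0 < e <= E -> a <= k * e) -> a <= 0.
Proof.
  intros HE H. destruct (Rle_dec a 0) as [|Ha]; [assumption|exfalso].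
  set (e := Rmin E (a / (2 * (Rabs k + 1)))).
  pose proof (Rabs_pos k).
  assert (He : 0 < e <= E).
  { split; [apply Rmin_pos; [lra|apply Rdiv_lt_0_compat; lra]|apply Rmin_l]. }
  assert (e <= a / (2 * (Rabs k + 1))) by apply Rmin_r.
  assert (k * e <= Rabs k * e) by (apply Rmult_le_compat_r; [lra|apply RRle_abs]).
  assert (Rabs k * e <= a / 2).
  { apply Rle_trans with (Rabs k * (a / (2 * (Rabs k + 1)))); [apply Rmult_le_compat_l; lra|].
    apply (Rmult_le_reg_r (2 * (Rabs k + 1))); [lra|]. field_simplify; nra. }
  specialize (H e He). lra.
Qed.

Lemma sum_f_R0_telescope (T : nat -> R) N :
  sum_f_R0 (fun k => T k - T (S k)) N = T O - T (S N).
Proof. induction N as [|N IH]; simpl; [|rewrite IH]; ring. Qed.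

Lemma sum_f_R0_mult_l (f : nat -> R) c N : sum_f_R0 (fun i => c * f i) N = c * sum_f_R0 f N.
Proof. induction N as [|N IH]; simpl; [|rewrite IH]; ring. Qed.

Lemma is_derive_sum_f_R0 (F dF : nat -> R -> R) N x :
  (forall k, is_derive (F k) x (dF k x)) ->
  is_derive (fun t => sum_f_R0 (fun k => F k t) N) x (sum_f_R0 (fun k => dF k x) N).
Proof.
  intros HF; induction N as [|N IH]; simpl; [apply HF|].
  exact (is_derive_plus _ (F (S N)) x _ _ IH (HF (S N))).
Qed.

Lemma RInt_sum_f_R0 (F : nat -> R -> R) N a b : (forall k, ex_RInt (F k) a b) ->
  RInt (fun t => sum_f_R0 (fun k => F k t) N) a b = sum_f_R0 (fun k => RInt (F k) a b) N.
Proof.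
  intros HF. apply (@is_RInt_unique R_CompleteNormedModule).
  induction N as [|N IH]; simpl; [apply (RInt_correct (F 0%nat)), HF|].
  apply (is_RInt_plus (fun t => sum_f_R0 (fun k => F k t) N) (F (S N))); [exact IH|].
  apply (RInt_correct (F (S N))), HF.
Qed.

(** * Bernstein approximation in the variable sin^2 t *)

(* [bernstein m i x] is C(m, i) x^i (1 - x)^(m - i), built by Pascal's rule. *)
Fixpoint bernstein (m i : nat) (x : R) : R :=
  match m with
  | O => match i with O => 1 | S _ => 0 end
  | S m' => (1 - x) * bernstein m' i x
            + match i with O => 0 | S i' => x * bernstein m' i' x end
  end.

Lemma bernstein_ge0 m i x : 0 <= x <= 1 -> 0 <= bernstein m i x.
Proof.
  intros Hx; revert i; induction m as [|m IH]; intros [|i]; simpl; try lra.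
  - specialize (IH 0%nat). nra.
  - pose proof (IH (S i)); pose proof (IH i). nra.
Qed.

Lemma bernstein_eq0 m i x : (m < i)%nat -> bernstein m i x = 0.
Proof.
  revert i; induction m as [|m IH]; intros [|i] Hi; simpl; try lia; [reflexivity|].
  rewrite !IH by lia. ring.
Qed.

Lemma sum_bernstein_S (g : nat -> R) m x :
  sum_f_R0 (fun i => g i * bernstein (S m) i x) (S m) =
  sum_f_R0 (fun i => ((1 - x) * g i + x * g (S i)) * bernstein m i x) m.
Proof.
  assert (Hlast : sum_f_R0 (fun i => g i * bernstein m i x) (S m)
                  = sum_f_R0 (fun i => g i * bernstein m i x) m).
  { rewrite tech5, (bernstein_eq0 m (S m)) by lia. ring. }
  rewrite decomp_sum by lia. simpl Nat.pred.
  rewrite (sum_eq _ (fun i => (1 - x) * (g (S i) * bernstein m (S i) x)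
                              + x * (g (S i) * bernstein m i x)))
    by (intros; simpl; ring).
  rewrite (sum_eq (fun i => ((1 - x) * g i + x * g (S i)) * bernstein m i x)
                  (fun i => (1 - x) * (g i * bernstein m i x)
                            + x * (g (S i) * bernstein m i x)))
    by (intros; ring).
  rewrite !sum_plus, !sum_f_R0_mult_l, <- Hlast, (decomp_sum _ (S m)) by lia.
  simpl. ring.
Qed.

Lemma sum_bernstein m x : sum_f_R0 (fun i => bernstein m i x) m = 1.
Proof.
  induction m as [|m IH]; [reflexivity|].
  rewrite (sum_eq _ (fun i => 1 * bernstein (S m) i x)), sum_bernstein_S by (intros; ring).
  transitivity (sum_f_R0 (fun i => bernstein m i x) m); [|exact IH].
  apply sum_eq. intros; ring.
Qed.

Lemma sum_INR_bernstein m x : sum_f_R0 (fun i => INR i * bernstein m i x) m = INR m * x.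
Proof.
  induction m as [|m IH]; [simpl; ring|].
  rewrite sum_bernstein_S.
  rewrite (sum_eq _ (fun i => INR i * bernstein m i x + x * bernstein m i x))
    by (intros; rewrite S_INR; ring).
  rewrite sum_plus, IH, sum_f_R0_mult_l, sum_bernstein, S_INR. ring.
Qed.

Lemma sum_INR2_bernstein m x :
  sum_f_R0 (fun i => INR i ^ 2 * bernstein m i x) m = INR m * x * (1 - x) + INR m ^ 2 * x ^ 2.
Proof.
  induction m as [|m IH]; [simpl; ring|].
  rewrite sum_bernstein_S.
  rewrite (sum_eq _ (fun i => INR i ^ 2 * bernstein m i x + (2 * x) * (INR i * bernstein m i x)
                              + x * bernstein m i x))
    by (intros; rewrite S_INR; ring).
  rewrite !sum_plus, IH, !sum_f_R0_mult_l, sum_bernstein, sum_INR_bernstein, S_INR. ring.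
Qed.

Lemma bernstein_variance m x : (0 < m)%nat ->
  sum_f_R0 (fun i => (x - INR i / INR m) ^ 2 * bernstein m i x) m = x * (1 - x) / INR m.
Proof.
  intros Hm. assert (0 < INR m) by (apply lt_0_INR; lia).
  rewrite (sum_eq _ (fun i => x ^ 2 * bernstein m i x
                              + (- 2 * x / INR m) * (INR i * bernstein m i x)
                              + / INR m ^ 2 * (INR i ^ 2 * bernstein m i x)))
    by (intros; field; lra).
  rewrite !sum_plus, !sum_f_R0_mult_l, sum_bernstein, sum_INR_bernstein, sum_INR2_bernstein.
  field. lra.
Qed.

Lemma trig_poly_bernstein f m i : trig_poly f -> trig_poly (fun t => bernstein m i (f t)).
Proof.
  intros Hf; revert i; induction m as [|m IH]; intros [|i]; simpl.
  - apply trig_poly_const.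
  - apply trig_poly_const.
  - apply (trig_poly_ext (fun t => (1 - f t) * bernstein m 0 (f t) + 0)); [reflexivity|].
    prove_trig_poly; auto.
  - prove_trig_poly; auto.
Qed.

Lemma sin2_diff a b : sin a ^ 2 - sin b ^ 2 = sin (a + b) * sin (a - b).
Proof.
  rewrite sin_plus, sin_minus.
  pose proof (sin2_cos2 a) as Ha; pose proof (sin2_cos2 b) as Hb; unfold Rsqr in *.
  cbn [pow]. nsatz.
Qed.

Lemma sin2_sep t s e : 0 <= t <= PI/2 -> 0 <= s <= PI/2 -> 0 < e <= Rabs (t - s) ->
  sin e ^ 2 <= Rabs (sin t ^ 2 - sin s ^ 2).
Proof.
  intros Ht Hs He.
  assert (Hsum : e <= t + s <= PI - e) by (revert He; unfold Rabs; destruct Rcase_abs; lra).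
  assert (Hdiff : sin e <= Rabs (sin (t - s))).
  { revert He; unfold Rabs at 1; destruct Rcase_abs; intros He.
    - replace (t - s) with (- (s - t)) by ring.
      rewrite sin_neg, Rabs_Ropp, Rabs_right by (apply Rle_ge, sin_ge_0; lra).
      apply sin_incr_1; lra.
    - rewrite Rabs_right by (apply Rle_ge, sin_ge_0; lra).
      apply sin_incr_1; lra. }
  assert (Hplus : sin e <= sin (t + s)).
  { destruct (Rle_dec (t + s) (PI/2)).
    - apply sin_incr_1; lra.
    - rewrite <- (sin_PI_x (t + s)). apply sin_incr_1; lra. }
  assert (0 <= sin e) by (apply sin_ge_0; lra).
  rewrite sin2_diff, Rabs_mult, (Rabs_right (sin (t + s))) by lra.
  simpl. rewrite Rmult_1_r. apply Rmult_le_compat; lra.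
Qed.

(* [g] is Lipschitz in [t] but is approximated in the variable [sin t ^ 2]; this bound
   replaces the modulus of continuity in Bernstein's estimate. *)
Lemma dist_le_sin2_dist t s e : 0 <= t <= PI/2 -> 0 <= s <= PI/2 -> 0 < e <= PI/2 ->
  Rabs (t - s) <= e + PI/2 / sin e ^ 4 * (sin t ^ 2 - sin s ^ 2) ^ 2.
Proof.
  intros Ht Hs He.
  assert (Hse : 0 < sin e ^ 4) by (apply pow_lt, sin_gt_0; lra).
  assert (0 <= PI/2 / sin e ^ 4 * (sin t ^ 2 - sin s ^ 2) ^ 2).
  { apply Rmult_le_pos; [apply Rlt_le, Rdiv_lt_0_compat; lra|apply pow2_ge_0]. }
  destruct (Rlt_dec (Rabs (t - s)) e); [lra|].
  assert (Hsep := sin2_sep t s e Ht Hs ltac:(lra)).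
  assert (Hsep2 : sin e ^ 4 <= (sin t ^ 2 - sin s ^ 2) ^ 2).
  { rewrite <- (pow2_abs (sin t ^ 2 - sin s ^ 2)).
    replace (sin e ^ 4) with ((sin e ^ 2) ^ 2) by ring.
    apply pow_incr. split; [apply pow2_ge_0|exact Hsep]. }
  assert (PI/2 <= PI/2 / sin e ^ 4 * (sin t ^ 2 - sin s ^ 2) ^ 2).
  { unfold Rdiv. rewrite Rmult_assoc. rewrite <- (Rmult_1_r (PI/2)) at 1.
    apply Rmult_le_compat_l; [lra|].
    apply (Rmult_le_reg_l (sin e ^ 4)); [exact Hse|].
    rewrite <- Rmult_assoc, Rinv_r; lra. }
  assert (Rabs (t - s) <= PI/2) by (apply Rabs_le; lra).
  lra.
Qed.

Definition sin2_node (m i : nat) : R := asin (sqrt (INR i / INR m)).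

Lemma sin2_node_spec m i : (0 < m)%nat -> (i <= m)%nat ->
  0 <= sin2_node m i <= PI/2 /\ sin (sin2_node m i) ^ 2 = INR i / INR m.
Proof.
  intros Hm Hi.
  assert (Hq : 0 <= INR i / INR m <= 1).
  { assert (0 < INR m) by (apply lt_0_INR; lia).
    assert (INR i <= INR m) by (apply le_INR; lia).
    pose proof (pos_INR i). split.
    - apply Rdiv_le_0_compat; lra.
    - apply (Rmult_le_reg_r (INR m)); [lra|]. field_simplify; lra. }
  assert (Hy : 0 <= sqrt (INR i / INR m) <= 1).
  { split; [apply sqrt_pos|]. rewrite <- sqrt_1. apply sqrt_le_1_alt; lra. }
  assert (Hsin : sin (sin2_node m i) = sqrt (INR i / INR m)) by (apply sin_asin; lra).
  pose proof (asin_bound (sqrt (INR i / INR m))) as Hb. fold (sin2_node m i) in Hb.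
  split; [split|].
  - destruct (Rle_dec 0 (sin2_node m i)) as [|Hneg]; [assumption|].
    assert (sin (sin2_node m i) < 0) by (apply sin_lt_0_var; lra). lra.
  - lra.
  - rewrite Hsin, <- Rsqr_pow2. apply Rsqr_sqrt; lra.
Qed.

Section Moments.

Variable W : R -> R.
Hypothesis W_continuous : forall x, continuous W x.
Hypothesis W_moments : forall k, RInt (fun t => W t * (sin t ^ 2) ^ k) 0 (PI/2) = 0.

Lemma continuous_W_bernstein a m i x :
  continuous (fun t => W t * (sin t ^ 2) ^ a * bernstein m i (sin t ^ 2)) x.
Proof.
  apply continuous_Rmult; [apply continuous_Rmult; [apply W_continuous|]|];
    apply trig_poly_continuous; [|apply trig_poly_bernstein]; prove_trig_poly.
Qed.

Lemma ex_RInt_W_bernstein a m i u v :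
  ex_RInt (fun t => W t * (sin t ^ 2) ^ a * bernstein m i (sin t ^ 2)) u v.
Proof.
  apply (@ex_RInt_continuous R_CompleteNormedModule). intros; apply continuous_W_bernstein.
Qed.

Lemma RInt_W_bernstein m : forall i a,
  RInt (fun t => W t * (sin t ^ 2) ^ a * bernstein m i (sin t ^ 2)) 0 (PI/2) = 0.
Proof.
  induction m as [|m IH]; intros [|i] a; simpl bernstein.
  - transitivity (RInt (fun t => W t * (sin t ^ 2) ^ a) 0 (PI/2)); [|apply W_moments].
    apply RInt_ext. intros. simpl. ring.
  - rewrite (RInt_ext _ (fun _ => 0)) by (intros; simpl; ring).
    rewrite RInt_const. apply Rmult_0_r.
  - rewrite (RInt_ext _ (fun t => W t * (sin t ^ 2) ^ a * bernstein m 0 (sin t ^ 2)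
                                  - W t * (sin t ^ 2) ^ (S a) * bernstein m 0 (sin t ^ 2)))
      by (intros; simpl; ring).
    rewrite RInt_Rminus, !IH by apply ex_RInt_W_bernstein. apply Rminus_0_r.
  - rewrite (RInt_ext _ (fun t => W t * (sin t ^ 2) ^ a * bernstein m (S i) (sin t ^ 2)
                                  - W t * (sin t ^ 2) ^ (S a) * bernstein m (S i) (sin t ^ 2)
                                  + W t * (sin t ^ 2) ^ (S a) * bernstein m i (sin t ^ 2)))
      by (intros; simpl; ring).
    pose proof (ex_RInt_W_bernstein a m (S i) 0 (PI/2)) as H1.
    pose proof (ex_RInt_W_bernstein (S a) m (S i) 0 (PI/2)) as H2.
    pose proof (ex_RInt_W_bernstein (S a) m i 0 (PI/2)) as H3.
    rewrite RInt_Rplus, RInt_Rminus, !IH by first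
      [exact H1 | exact H2 | exact H3 | exact (ex_RInt_minus _ _ _ _ H1 H2)].
    rewrite Rminus_0_r, Rplus_0_r. reflexivity.
Qed.

Variables (g : R -> R) (L : R).
Hypothesis g_continuous : forall x, continuous g x.
Hypothesis g_lipschitz : forall t s, 0 <= t <= PI/2 -> 0 <= s <= PI/2 ->
  Rabs (g t - g s) <= L * Rabs (t - s).

Lemma lipschitz_const_ge0 : 0 <= L.
Proof.
  pose proof PI2_RGT_0.
  pose proof (g_lipschitz 0 (PI/2) ltac:(lra) ltac:(lra)) as Hg.
  rewrite (Rabs_left (0 - PI/2)) in Hg by lra.
  pose proof (Rabs_pos (g 0 - g (PI/2))). nra.
Qed.

Definition bernstein_sin2 (m : nat) (t : R) : R :=
  sum_f_R0 (fun i => g (sin2_node m i) * bernstein m i (sin t ^ 2)) m.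

Lemma bernstein_sin2_error m e t : (0 < m)%nat -> 0 < e <= PI/2 -> 0 <= t <= PI/2 ->
  Rabs (g t - bernstein_sin2 m t) <= L * e + L * (PI/2 / sin e ^ 4) / (4 * INR m).
Proof.
  intros Hm He Ht.
  assert (Hm0 : 0 < INR m) by (apply lt_0_INR; lia).
  set (C := PI/2 / sin e ^ 4).
  assert (HC : 0 <= C) by (apply Rlt_le, Rdiv_lt_0_compat; [lra|apply pow_lt, sin_gt_0; lra]).
  pose proof lipschitz_const_ge0 as HL.
  set (x := sin t ^ 2).
  assert (Hx : 0 <= x <= 1).
  { pose proof (sin2_cos2 t). unfold x, Rsqr in *. simpl. nra. }
  assert (Hdiff : g t - bernstein_sin2 m t
                  = sum_f_R0 (fun i => (g t - g (sin2_node m i)) * bernstein m i x) m).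
  { unfold bernstein_sin2. fold x.
    rewrite <- (Rmult_1_r (g t)) at 1.
    rewrite <- (sum_bernstein m x), <- sum_f_R0_mult_l, <- minus_sum.
    apply sum_eq; intros; ring. }
  rewrite Hdiff.
  eapply Rle_trans; [apply sum_f_R0_triangle|].
  eapply Rle_trans.
  { apply (sum_Rle _ (fun i => L * e * bernstein m i x
                              + L * C * ((x - INR i / INR m) ^ 2 * bernstein m i x))).
    intros i Hi. destruct (sin2_node_spec m i Hm Hi) as [Hnode Hsin].
    pose proof (bernstein_ge0 m i x Hx).
    pose proof (dist_le_sin2_dist t (sin2_node m i) e Ht Hnode He) as Hdist.
    fold C x in Hdist. rewrite Hsin in Hdist.
    rewrite Rabs_mult, (Rabs_right (bernstein m i x)) by lra.
    apply Rle_trans with (L * (e + C * (x - INR i / INR m) ^ 2) * bernstein m i x); [|right; ring].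
    apply Rmult_le_compat_r; [lra|].
    eapply Rle_trans; [apply g_lipschitz; auto|]. apply Rmult_le_compat_l; auto. }
  rewrite sum_plus, !sum_f_R0_mult_l, sum_bernstein, bernstein_variance by exact Hm.
  assert (x * (1 - x) <= 1/4) by (pose proof (pow2_ge_0 (x - 1/2)); nra).
  assert (Hv : x * (1 - x) / INR m <= / (4 * INR m)).
  { rewrite Rinv_mult. apply Rmult_le_compat_r; [apply Rlt_le, Rinv_0_lt_compat|]; lra. }
  rewrite Rmult_1_r. apply Rplus_le_compat_l, Rmult_le_compat_l; [|exact Hv].
  apply Rmult_le_pos; assumption.
Qed.

Lemma RInt_W_bernstein_sin2 m : RInt (fun t => W t * bernstein_sin2 m t) 0 (PI/2) = 0.
Proof.
  rewrite (RInt_ext _ (fun t => sum_f_R0 (fun i => g (sin2_node m i)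
             * (W t * (sin t ^ 2) ^ 0 * bernstein m i (sin t ^ 2))) m)).
  2: { intros t _. unfold bernstein_sin2. rewrite scal_sum. apply sum_eq; intros; simpl; ring. }
  rewrite RInt_sum_f_R0.
  - rewrite (sum_eq _ (fun _ => 0)), sum_cte; [apply Rmult_0_l|].
    intros i _. rewrite RInt_Rmult_l, RInt_W_bernstein by apply ex_RInt_W_bernstein.
    apply Rmult_0_r.
  - intros i. apply (ex_RInt_scal (V := R_CompleteNormedModule)), ex_RInt_W_bernstein.
Qed.

Lemma RInt_W_lipschitz_bound m e : (0 < m)%nat -> 0 < e <= PI/2 ->
  Rabs (RInt (fun t => W t * g t) 0 (PI/2)) <=
  (L * e + L * (PI/2 / sin e ^ 4) / (4 * INR m)) * RInt (fun t => Rabs (W t)) 0 (PI/2).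
Proof.
  intros Hm He. pose proof PI2_RGT_0.
  assert (HB : forall x, continuous (bernstein_sin2 m) x).
  { intros x. apply trig_poly_continuous, trig_poly_sum. intros i.
    apply (trig_poly_mult (fun _ => _)); [apply trig_poly_const|].
    apply trig_poly_bernstein; prove_trig_poly. }
  assert (HW : forall x, continuous (fun t => Rabs (W t)) x)
    by (intros; apply (continuous_comp W Rabs); [auto|apply continuous_Rabs]).
  assert (Hdiff : forall x, continuous (fun t => W t * g t - W t * bernstein_sin2 m t) x)
    by (intros; apply continuous_Rminus; apply continuous_Rmult; auto).
  assert (Hint : forall f : R -> R, (forall x, continuous f x) -> ex_RInt f 0 (PI/2))
    by (intros f Hf; apply (@ex_RInt_continuous R_CompleteNormedModule); auto).
  replace (RInt (fun t => W t * g t) 0 (PI/2))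
    with (RInt (fun t => W t * g t - W t * bernstein_sin2 m t) 0 (PI/2)).
  2: { rewrite RInt_Rminus, RInt_W_bernstein_sin2
         by (apply Hint; intros; apply continuous_Rmult; auto).
       apply Rminus_0_r. }
  eapply Rle_trans; [apply abs_RInt_le; [lra|apply Hint, Hdiff]|].
  rewrite <- RInt_Rmult_l by (apply Hint, HW).
  apply RInt_le; [lra| | |].
  - apply Hint. intros x.
    apply (continuous_comp (fun t => W t * g t - W t * bernstein_sin2 m t) Rabs);
      [apply Hdiff|apply continuous_Rabs].
  - apply (ex_RInt_scal (V := R_CompleteNormedModule)), Hint, HW.
  - intros t Ht.
    replace (W t * g t - W t * bernstein_sin2 m t) with (W t * (g t - bernstein_sin2 m t)) by ring.
    rewrite Rabs_mult, Rmult_comm.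
    apply Rmult_le_compat_r; [apply Rabs_pos|]. apply bernstein_sin2_error; auto; lra.
Qed.

Lemma RInt_W_lipschitz_eq0 : RInt (fun t => W t * g t) 0 (PI/2) = 0.
Proof.
  set (IW := RInt (fun t => Rabs (W t)) 0 (PI/2)).
  apply Rabs_eq_0, Rle_antisym; [|apply Rabs_pos].
  apply (Rle_0_of_le_mult_small _ (L * IW) (PI/2) PI2_RGT_0). intros e He.
  assert (0 < sin e) by (apply sin_gt_0; lra).
  apply (Rle_of_le_plus_div_INR _ _ (L * (PI/2 / sin e ^ 4) * IW / 4)). intros m Hm.
  assert (0 < INR m) by (apply lt_0_INR; exact Hm).
  eapply Rle_trans; [exact (RInt_W_lipschitz_bound m e Hm He)|].
  right. fold IW. field. split; lra.
Qed.

End Moments.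

(** * The Jacobi operator for rho = 1 and rho = -1 *)

Lemma r_rho_opp rho t : t < PI/2 -> r_rho (- rho) t = - r_rho rho t.
Proof.
  intros Ht. unfold r_rho. destruct (Rlt_dec t (PI/2)); [|lra].
  rewrite Ropp_mult_distr_l_reverse. apply atan_opp.
Qed.

Lemma jacobi_op_opp n p rho lam xi t : t < PI/2 ->
  jacobi_op n p (- rho) lam xi t = jacobi_op n p rho lam xi t.
Proof.
  intros Ht. unfold jacobi_op. rewrite r_rho_opp by exact Ht.
  rewrite <- !Ropp_mult_distr_r, !cos_neg. reflexivity.
Qed.

Lemma equivariant_spectrum_opp n p rho lam :
  equivariant_spectrum n p (- rho) lam <-> equivariant_spectrum n p rho lam.
Proof.
  split; intros [xi [Hsm [H0 [H1 [Hne Hode]]]]]; exists xi;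
    repeat split; auto; intros t Ht; [rewrite <- (jacobi_op_opp _ _ rho)|rewrite jacobi_op_opp];
    auto; lra.
Qed.

Definition drift (n p : nat) (t : R) : R :=
  (2 * INR n - 2 * INR p - 1) * cotR t - (2 * INR p + 1) * tan t.

Definition potential (n p : nat) (t : R) : R :=
  2 * (INR n - INR p - 1) * cos (2 * t) / (sin t) ^ 2
  - 2 * INR p * cos (2 * t) / (cos t) ^ 2
  + 4 * cos (4 * t) / (sin (2 * t)) ^ 2.

Lemma jacobi_op_1 n p lam xi t : - (PI/2) < t < PI/2 ->
  jacobi_op n p 1 lam xi t = Derive_n xi 2 t + drift n p t * Derive_n xi 1 t
                             - potential n p t * xi t + lam * xi t.
Proof.
  intros Ht. unfold jacobi_op, r_rho. destruct (Rlt_dec t (PI/2)); [|lra].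
  rewrite Rmult_1_l, atan_tan by exact Ht. reflexivity.
Qed.

Definition eigenvalue (n j : nat) : R := 4 * INR j * (INR j + INR n + 2).

Definition ladder_coef (n k : nat) : R := 2 * INR k * (2 * INR k + INR n + 1).

Definition psi (k : nat) (t : R) : R := cos t * sin t ^ (2*k+1).

Definition dpsi (k : nat) (t : R) : R :=
  INR (2*k+1) * cos t ^ 2 * sin t ^ (2*k) - sin t ^ (2*k+2).

Definition d2psi (k : nat) (t : R) : R :=
  INR (2*k+1) * (INR (2*k) * cos t ^ 3 * sin t ^ (2*k-1) - 2 * cos t * sin t ^ (2*k+1))
  - INR (2*k+2) * cos t * sin t ^ (2*k+1).

Lemma is_derive_psi k t : is_derive (psi k) t (dpsi k t).
Proof.
  unfold psi, dpsi. generalize (2*k)%nat; intros m.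
  auto_derive; [exact I|].
  replace (Nat.pred (m+1)) with m by lia. replace (m+2)%nat with (m+1+1)%nat by lia.
  rewrite !pow_add. simpl. ring.
Qed.

Lemma is_derive_dpsi k t : is_derive (dpsi k) t (d2psi k t).
Proof.
  unfold dpsi, d2psi. generalize (2*k)%nat; intros m.
  auto_derive; [exact I|].
  replace (Nat.pred (m+2)) with (m+1)%nat by lia. replace (Nat.pred m) with (m-1)%nat by lia.
  rewrite !pow_add. simpl. ring.
Qed.

Lemma psi_ladder n p k t : n = (2*p+1)%nat -> 0 < t < PI/2 ->
  d2psi k t + drift n p t * dpsi k t - potential n p t * psi k t
  = - eigenvalue n k * psi k t + ladder_coef n k * psi (Nat.pred k) t.
Proof.
  intros -> Ht.
  assert (Hs : 0 < sin t) by (apply sin_gt_0; lra).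
  assert (Hc : 0 < cos t) by (apply cos_gt_0; lra).
  pose proof (sin2_cos2 t) as Hsc. unfold Rsqr in Hsc.
  unfold d2psi, dpsi, psi, drift, potential, eigenvalue, ladder_coef, cotR, tan.
  replace (4 * t) with (2 * (2 * t)) by ring.
  rewrite ?cos_2a, ?sin_2a.
  destruct k as [|k]; simpl Nat.pred.
  - rewrite !plus_INR, !mult_INR. simpl.
    generalize (INR p) (sin t) (cos t) Hs Hc Hsc; intros P S C HS HC HSC.
    field_simplify_eq; [|lra..]. cbn [pow] in *. nsatz.
  - replace (2 * S k + 1)%nat with (2*k+1+2)%nat by lia.
    replace (2 * S k + 2)%nat with (2*k+1+3)%nat by lia.
    replace (2 * S k - 1)%nat with (2*k+1)%nat by lia.
    replace (2 * S k)%nat with (2*k+1+1)%nat by lia.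
    rewrite !pow_add, !plus_INR, !mult_INR, !S_INR. simpl.
    generalize (sin t ^ (2*k+1)) (INR k) (INR p) (sin t) (cos t) Hs Hc Hsc;
      intros X K P S C HS HC HSC.
    field_simplify_eq; [|lra..]. cbn [pow] in *. nsatz.
Qed.

Lemma psi_sin2 k t : psi k t = cos t * sin t * (sin t ^ 2) ^ k.
Proof. unfold psi. rewrite pow_add, <- pow_mult, Nat.mul_comm. ring. Qed.

Lemma trig_poly_psi k : trig_poly (psi k).
Proof. unfold psi. prove_trig_poly. Qed.

Lemma trig_poly_dpsi k : trig_poly (dpsi k).
Proof. unfold dpsi. prove_trig_poly. Qed.

Lemma trig_poly_d2psi k : trig_poly (d2psi k).
Proof. unfold d2psi. prove_trig_poly. Qed.

(* [b_(k+1) c_(k+1) = - b_k (lam_j - lam_k)] makes [(L + lam_j) (sum b_k psi_k)]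
   telescope, and the factor [lam_j - lam_j] stops the sum at [k = j]. *)
Fixpoint eigen_coef (n j k : nat) : R :=
  match k with
  | O => 1
  | S k => - eigen_coef n j k * (eigenvalue n j - eigenvalue n k) / ladder_coef n (S k)
  end.

Definition eigenfunction (n j : nat) (t : R) : R :=
  sum_f_R0 (fun k => eigen_coef n j k * psi k t) j.

Lemma trig_poly_eigenfunction n j : trig_poly (eigenfunction n j).
Proof.
  apply trig_poly_sum. intros k.
  apply (trig_poly_mult (fun _ => _)); [apply trig_poly_const|apply trig_poly_psi].
Qed.

Lemma Derive_eigenfunction n j t :
  Derive (eigenfunction n j) t = sum_f_R0 (fun k => eigen_coef n j k * dpsi k t) j.
Proof.
  apply is_derive_unique. unfold eigenfunction.
  apply (is_derive_sum_f_R0 (fun k t => eigen_coef n j k * psi k t)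
                            (fun k t => eigen_coef n j k * dpsi k t)).
  intros k. apply is_derive_scal, is_derive_psi.
Qed.

Lemma Derive2_eigenfunction n j t :
  Derive (Derive (eigenfunction n j)) t = sum_f_R0 (fun k => eigen_coef n j k * d2psi k t) j.
Proof.
  rewrite (Derive_ext _ _ t (Derive_eigenfunction n j)).
  apply is_derive_unique.
  apply (is_derive_sum_f_R0 (fun k t => eigen_coef n j k * dpsi k t)
                            (fun k t => eigen_coef n j k * d2psi k t)).
  intros k. apply is_derive_scal, is_derive_dpsi.
Qed.

Lemma eigenfunction_ode n p j t : n = (2*p+1)%nat -> 0 < t < PI/2 ->
  Derive_n (eigenfunction n j) 2 t + drift n p t * Derive_n (eigenfunction n j) 1 t
  - potential n p t * eigenfunction n j t + eigenvalue n j * eigenfunction n j t = 0.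
Proof.
  intros Hn Ht. simpl. rewrite Derive2_eigenfunction, Derive_eigenfunction.
  unfold eigenfunction. rewrite <- !sum_f_R0_mult_l, <- sum_plus, <- minus_sum, <- sum_plus.
  set (T k := eigen_coef n j k * ladder_coef n k * psi (Nat.pred k) t).
  rewrite (sum_eq _ (fun k => T k - T (S k))), sum_f_R0_telescope.
  - unfold T; simpl. unfold ladder_coef, Rdiv. simpl. ring.
  - intros k _. unfold T. simpl eigen_coef. simpl Nat.pred.
    assert (ladder_coef n (S k) <> 0).
    { unfold ladder_coef. rewrite S_INR. pose proof (pos_INR k); pose proof (pos_INR n). nra. }
    transitivity (eigen_coef n j k
                    * (d2psi k t + drift n p t * dpsi k t - potential n p t * psi k t)
                  + eigenvalue n j * (eigen_coef n j k * psi k t)); [ring|].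
    rewrite psi_ladder by assumption. field. assumption.
Qed.

Lemma psi_0 k : psi k 0 = 0.
Proof. unfold psi. rewrite sin_0, pow_i by lia. ring. Qed.

Lemma psi_PI2 k : psi k (PI/2) = 0.
Proof. unfold psi. rewrite cos_PI2. ring. Qed.

Lemma eigenfunction_0 n j : eigenfunction n j 0 = 0.
Proof.
  unfold eigenfunction. rewrite (sum_eq _ (fun _ => 0)), sum_cte; [ring|].
  intros k _. rewrite psi_0. ring.
Qed.

Lemma eigenfunction_PI2 n j : eigenfunction n j (PI/2) = 0.
Proof.
  unfold eigenfunction. rewrite (sum_eq _ (fun _ => 0)), sum_cte; [ring|].
  intros k _. rewrite psi_PI2. ring.
Qed.

Lemma sum_f_R0_pow_0 (b : nat -> R) N : sum_f_R0 (fun k => b k * 0 ^ k) N = b O.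
Proof. induction N as [|N IH]; simpl; [|rewrite IH]; ring. Qed.

Lemma eigenfunction_nonzero n j : exists t, 0 <= t <= PI/2 /\ eigenfunction n j t <> 0.
Proof.
  set (Q t := sum_f_R0 (fun k => eigen_coef n j k * (sin t ^ 2) ^ k) j).
  assert (HQ0 : Q 0 = 1).
  { unfold Q. rewrite sin_0, pow_i, sum_f_R0_pow_0 by lia. reflexivity. }
  assert (HQ : continuous Q 0).
  { apply trig_poly_continuous, trig_poly_sum. intros k.
    apply (trig_poly_mult (fun _ => _)); prove_trig_poly. }
  destruct (continuous_pos_locally Q 0 HQ) as [d [Hd HQpos]]; [lra|].
  pose proof PI2_RGT_0.
  set (t := Rmin d (PI/2) / 2).
  assert (Ht : 0 < t < PI/2).
  { pose proof (Rmin_l d (PI/2)); pose proof (Rmin_r d (PI/2)); pose proof (Rmin_pos d (PI/2)).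
    unfold t; lra. }
  exists t. split; [lra|].
  assert (0 < sin t) by (apply sin_gt_0; lra).
  assert (0 < cos t) by (apply cos_gt_0; lra).
  assert (0 < Q t).
  { apply HQpos. rewrite Rminus_0_r, Rabs_right by lra.
    pose proof (Rmin_l d (PI/2)); unfold t; lra. }
  unfold eigenfunction.
  rewrite (sum_eq _ (fun k => cos t * sin t * (eigen_coef n j k * (sin t ^ 2) ^ k)))
    by (intros; rewrite psi_sin2; ring).
  rewrite sum_f_R0_mult_l. apply Rgt_not_eq. fold (Q t).
  apply Rmult_gt_0_compat; [apply Rmult_gt_0_compat|]; assumption.
Qed.

(** * Green's formula for the weight (sin t cos t)^n *)

Definition weight (n : nat) (t : R) : R := (sin t * cos t) ^ n.

Definition dweight (n : nat) (t : R) : R :=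
  INR n * (sin t * cos t) ^ Nat.pred n * (cos t ^ 2 - sin t ^ 2).

Lemma is_derive_weight n t : is_derive (weight n) t (dweight n t).
Proof. unfold weight, dweight. auto_derive; [exact I|]. ring. Qed.

Lemma trig_poly_weight n : trig_poly (weight n).
Proof. unfold weight. prove_trig_poly. Qed.

Lemma trig_poly_dweight n : trig_poly (dweight n).
Proof. unfold dweight. prove_trig_poly. Qed.

Lemma dweight_drift n p t : n = (2*p+1)%nat -> 0 < t < PI/2 ->
  dweight n t = weight n t * drift n p t.
Proof.
  intros -> Ht.
  assert (0 < sin t) by (apply sin_gt_0; lra).
  assert (0 < cos t) by (apply cos_gt_0; lra).
  unfold dweight, weight, drift, cotR, tan.
  replace (Nat.pred (2*p+1)) with (2*p)%nat by lia.
  rewrite pow_add, plus_INR, mult_INR. simpl. field. lra.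
Qed.

Lemma weight_0 n : (0 < n)%nat -> weight n 0 = 0.
Proof. intros Hn. unfold weight. rewrite sin_0, Rmult_0_l. apply pow_i, Hn. Qed.

Lemma weight_PI2 n : (0 < n)%nat -> weight n (PI/2) = 0.
Proof. intros Hn. unfold weight. rewrite cos_PI2, Rmult_0_r. apply pow_i, Hn. Qed.

Lemma weight_pos n t : 0 < t < PI/2 -> 0 < weight n t.
Proof.
  intros Ht. apply pow_lt, Rmult_lt_0_compat; [apply sin_gt_0|apply cos_gt_0]; lra.
Qed.

Lemma weight_cos_sin_pos n t : 0 < t < PI/2 -> 0 < weight n t * cos t * sin t.
Proof.
  intros Ht. pose proof (weight_pos n t Ht).
  assert (0 < sin t) by (apply sin_gt_0; lra). assert (0 < cos t) by (apply cos_gt_0; lra).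
  apply Rmult_lt_0_compat; [apply Rmult_lt_0_compat|]; assumption.
Qed.

Section Green.

Variables (n p : nat) (lam : R) (xi : R -> R).
Hypothesis n_def : n = (2*p+1)%nat.
Hypothesis xi_smooth : smooth xi.
Hypothesis xi_ode : forall t, 0 < t < PI/2 -> jacobi_op n p 1 lam xi t = 0.

(* Since [dweight = weight * drift], the derivative of the weighted Wronskian is
   [weight * (L xi * psi_k - L psi_k * xi)]; the weight kills the boundary terms. *)
Definition wronskian (k : nat) (t : R) : R :=
  weight n t * (Derive_n xi 1 t * psi k t - dpsi k t * xi t).

Definition dwronskian (k : nat) (t : R) : R :=
  dweight n t * (Derive_n xi 1 t * psi k t - dpsi k t * xi t)
  + weight n t * (Derive_n xi 2 t * psi k t - d2psi k t * xi t).

Lemma is_derive_wronskian k t : is_derive (wronskian k) t (dwronskian k t).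
Proof.
  pose proof (smooth_is_derive xi 0 t xi_smooth) as Dxi.
  pose proof (smooth_is_derive xi 1 t xi_smooth) as D1xi.
  unfold wronskian.
  replace (dwronskian k t) with
    (dweight n t * (Derive_n xi 1 t * psi k t - dpsi k t * xi t)
     + weight n t * ((Derive_n xi 2 t * psi k t + Derive_n xi 1 t * dpsi k t)
                     - (d2psi k t * xi t + dpsi k t * Derive_n xi 1 t)))
    by (unfold dwronskian; ring).
  apply (is_derive_Rmult (weight n) (fun t => Derive_n xi 1 t * psi k t - dpsi k t * xi t));
    [apply is_derive_weight|].
  apply (is_derive_minus (fun t => Derive_n xi 1 t * psi k t) (fun t => dpsi k t * xi t)).
  - apply (is_derive_Rmult (Derive_n xi 1) (psi k)); [exact D1xi|apply is_derive_psi].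
  - apply (is_derive_Rmult (dpsi k) xi); [apply is_derive_dpsi|exact Dxi].
Qed.

Lemma continuous_dwronskian k t : continuous (dwronskian k) t.
Proof.
  pose proof (smooth_continuous xi 0 t xi_smooth) as C0xi.
  pose proof (smooth_continuous xi 1 t xi_smooth) as C1xi.
  pose proof (smooth_continuous xi 2 t xi_smooth) as C2xi.
  pose proof (fun f => trig_poly_continuous f t) as Ctrig.
  unfold dwronskian.
  apply continuous_Rplus; apply continuous_Rmult.
  - apply Ctrig, trig_poly_dweight.
  - apply continuous_Rminus; apply continuous_Rmult.
    + exact C1xi.
    + apply Ctrig, trig_poly_psi.
    + apply Ctrig, trig_poly_dpsi.
    + exact C0xi.
  - apply Ctrig, trig_poly_weight.
  - apply continuous_Rminus; apply continuous_Rmult.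
    + exact C2xi.
    + apply Ctrig, trig_poly_psi.
    + apply Ctrig, trig_poly_d2psi.
    + exact C0xi.
Qed.

Lemma dwronskian_eq k t : 0 < t < PI/2 ->
  dwronskian k t = - ((lam - eigenvalue n k) * (weight n t * xi t * psi k t)
                      + ladder_coef n k * (weight n t * xi t * psi (Nat.pred k) t)).
Proof.
  intros Ht.
  pose proof (xi_ode t Ht) as Hxi. rewrite jacobi_op_1 in Hxi by lra.
  pose proof (psi_ladder n p k t n_def Ht) as Hpsi.
  unfold dwronskian. rewrite (dweight_drift n p t n_def Ht).
  replace (Derive_n xi 2 t)
    with (- drift n p t * Derive_n xi 1 t + potential n p t * xi t - lam * xi t) by lra.
  replace (d2psi k t) with (- drift n p t * dpsi k t + potential n p t * psi k t
    - eigenvalue n k * psi k t + ladder_coef n k * psi (Nat.pred k) t) by lra.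
  ring.
Qed.

Lemma RInt_dwronskian k : RInt (dwronskian k) 0 (PI/2) = 0.
Proof.
  assert (Hn : (0 < n)%nat) by lia.
  rewrite (is_RInt_unique _ _ _ _ (is_RInt_derive (wronskian k) (dwronskian k) 0 (PI/2)
             (fun t _ => is_derive_wronskian k t) (fun t _ => continuous_dwronskian k t))).
  unfold wronskian. rewrite weight_0, weight_PI2 by exact Hn.
  unfold minus, plus, opp; simpl. ring.
Qed.

Definition moment (k : nat) : R := RInt (fun t => weight n t * xi t * psi k t) 0 (PI/2).

Lemma ex_RInt_moment k : ex_RInt (fun t => weight n t * xi t * psi k t) 0 (PI/2).
Proof.
  apply (@ex_RInt_continuous R_CompleteNormedModule). intros t _.
  apply continuous_Rmult; [apply continuous_Rmult|].
  - apply trig_poly_continuous, trig_poly_weight.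
  - exact (smooth_continuous xi 0 t xi_smooth).
  - apply trig_poly_continuous, trig_poly_psi.
Qed.

Lemma moment_recurrence k :
  (lam - eigenvalue n k) * moment k + ladder_coef n k * moment (Nat.pred k) = 0.
Proof.
  pose proof PI2_RGT_0 as HPI.
  pose proof (ex_RInt_scal _ _ _ (lam - eigenvalue n k) (ex_RInt_moment k)) as E1.
  pose proof (ex_RInt_scal _ _ _ (ladder_coef n k) (ex_RInt_moment (Nat.pred k))) as E2.
  pose proof (RInt_dwronskian k) as H.
  rewrite (RInt_ext _ (fun t => - ((lam - eigenvalue n k) * (weight n t * xi t * psi k t)
                     + ladder_coef n k * (weight n t * xi t * psi (Nat.pred k) t)))) in H.
  2: { intros t Ht. rewrite Rmin_left, Rmax_right in Ht by lra. apply dwronskian_eq; lra. }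
  rewrite RInt_Ropp, RInt_Rplus, !RInt_Rmult_l in H
    by first [exact E1 | exact E2 | exact (ex_RInt_plus _ _ _ _ E1 E2) | apply ex_RInt_moment].
  unfold moment. lra.
Qed.

Lemma moment_eq0 : (forall k, lam <> eigenvalue n k) -> forall k, moment k = 0.
Proof.
  intros Hlam k. induction k as [|k IH].
  - pose proof (moment_recurrence 0) as H.
    unfold ladder_coef in H. simpl INR in H. rewrite Rmult_0_r, !Rmult_0_l, Rplus_0_r in H.
    apply Rmult_integral in H as [H|H]; [|exact H].
    exfalso. apply (Hlam 0%nat). lra.
  - pose proof (moment_recurrence (S k)) as H. simpl Nat.pred in H.
    rewrite IH, Rmult_0_r, Rplus_0_r in H.
    apply Rmult_integral in H as [H|H]; [|exact H].
    exfalso. apply (Hlam (S k)). lra.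
Qed.

End Green.

Lemma jacobi_solution_eq0 n p lam xi : n = (2*p+1)%nat -> smooth xi ->
  (forall t, 0 < t < PI/2 -> jacobi_op n p 1 lam xi t = 0) ->
  (forall k, lam <> eigenvalue n k) -> forall t, 0 < t < PI/2 -> xi t = 0.
Proof.
  intros Hn Hsm Hode Hlam t Ht.
  pose proof PI2_RGT_0.
  set (w t := weight n t * cos t * sin t).
  set (W t := w t * xi t).
  assert (Hxi : forall x, continuous xi x) by (intros x; exact (smooth_continuous xi 0 x Hsm)).
  assert (HW : forall x, continuous W x).
  { intros x. apply continuous_Rmult; [|apply Hxi].
    apply trig_poly_continuous. unfold w.
    apply trig_poly_mult; [apply trig_poly_mult; [apply trig_poly_weight|]|]; prove_trig_poly. }
  assert (Hmoments : forall k, RInt (fun t => W t * (sin t ^ 2) ^ k) 0 (PI/2) = 0).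
  { intros k. transitivity (moment n xi k); [|exact (moment_eq0 n p lam xi Hn Hsm Hode Hlam k)].
    apply RInt_ext. intros x _. unfold W, w. rewrite psi_sin2. simpl. ring. }
  destruct (smooth_lipschitz xi Hsm 0 (PI/2)) as [L HL]; [lra|].
  assert (HWxi : w t * (xi t * xi t) = 0).
  { rewrite <- Rmult_assoc.
    apply (RInt_nonneg_eq0 (fun t => W t * xi t) 0 (PI/2) t Ht).
    - intros x. apply continuous_Rmult; auto.
    - intros x Hx. unfold W. rewrite Rmult_assoc.
      apply Rmult_le_pos; [apply Rlt_le, weight_cos_sin_pos, Hx|apply Rle_0_sqr].
    - exact (RInt_W_lipschitz_eq0 W HW Hmoments xi L Hxi HL). }
  pose proof (weight_cos_sin_pos n t Ht) as Hw.
  apply Rmult_integral in HWxi as [Hw0|Hxi0]; [unfold w in Hw0; lra|].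
  apply Rmult_integral in Hxi0 as [Hxi0|Hxi0]; exact Hxi0.
Qed.

Lemma equivariant_spectrum_1 n p lam : n = (2*p+1)%nat ->
  equivariant_spectrum n p 1 lam <-> exists j, lam = eigenvalue n j.
Proof.
  intros Hn. split.
  - intros [xi [Hsm [H0 [HPI2 [[t0 [Ht0 Hne]] Hode]]]]].
    apply NNPP. intros Hno. apply Hne.
    destruct (Req_dec t0 0) as [->|]; [exact H0|].
    destruct (Req_dec t0 (PI/2)) as [->|]; [exact HPI2|].
    apply (jacobi_solution_eq0 n p lam xi Hn Hsm Hode); [|lra].
    intros k Hk. apply Hno. exists k. exact Hk.
  - intros [j ->]. exists (eigenfunction n j). repeat split.
    + apply trig_poly_smooth, trig_poly_eigenfunction.
    + apply eigenfunction_0.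
    + apply eigenfunction_PI2.
    + apply eigenfunction_nonzero.
    + intros t Ht. pose proof PI2_RGT_0.
      rewrite jacobi_op_1 by lra. apply eigenfunction_ode; assumption.
Qed.

Theorem theoremD (n : nat) (Hpos : (0 < n)%nat) (Hodd : Nat.Odd n) :
  let p := ((n - 1) / 2)%nat in
  (forall lam : R, equivariant_spectrum n p 1 lam <->
     exists j : nat, lam = 4 * INR j * (INR j + INR n + 2)) /\
  (forall lam : R, equivariant_spectrum n p (-1) lam <->
     exists j : nat, lam = 4 * INR j * (INR j + INR n + 2)).
Proof.
  intros p.
  assert (Hn : n = (2*p+1)%nat).
  { destruct Hodd as [m ->]. unfold p.
    replace (2*m+1-1)%nat with (m*2)%nat by lia. rewrite Nat.div_mul; lia. }
  split; intros lam.
  - exact (equivariant_spectrum_1 n p lam Hn).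
  - replace (-1) with (- (1)) by ring.
    rewrite equivariant_spectrum_opp. exact (equivariant_spectrum_1 n p lam Hn).
Qed.
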